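(* If $\pi \in S_n$ then $\displaystyle \Delta_{\odot}([\pi]) = \sum_{\pi \overset{\bullet}=\pi'\pi''} [\pi']\otimes [\pi'']$ and $\epsilon_\odot([\pi]) = \begin{cases} 1 & \text{if }\ell(\pi)=0 \\ 0 & \text{if }\ell(\pi) \neq 0. \end{cases}$
   Context: Let $\Bbbk$ be a field. For a word (finite sequence of positive integers) $w=w_1\cdots w_m$ with $\max(w)\le n$, $[w,n]$ denotes the linear endomorphism of the $\Bbbk$-span of all words sending a word $v$ of length $n$ to $v_{w_1}\cdots v_{w_m}$ and other words to $0$. Define $\Delta_\odot([w,n])=\sum_{i=0}^m [w_1\cdots w_i,n]\otimes[w_{i+1}\cdots w_m,n]$ and $\epsilon_\odot([w,n])=1$ if $w=\emptyset$, else $0$, extended linearly. For $\pi\in S_n$ (generated by $s_i=(i,i+1)$), $\mathcal{R}(\pi)$ is the set of reduced words, $\ell(\pi)$ the length, and $[\pi]=\sum_{w\in\mathcal{R}(\pi)}[w,n-1]$. Write $\pi\overset{\bullet}=\pi'\pi''$ if $\pi',\pi''\in S_n$, $\pi=\pi'\pi''$ and $\ell(\pi)=\ell(\pi')+\ell(\pi'')$. *)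

From Stdlib Require Import ClassicalEpsilon.
From mathcomp Require Import all_boot all_fingroup all_algebra.
Set Implicit Arguments. Unset Strict Implicit. Unset Printing Implicit Defensive.
Import GRing.Theory.

(* s_i = (i, i+1) in S_n, for 1 <= i <= n-1; points of 'I_n are 0-based,
   so s_i swaps the ordinals i-1 and i.  Out-of-range letters give 1. *)
Definition adj (n i : nat) : 'S_n :=
  match @insub _ (fun x => x < n) ('I_n) i.-1, @insub _ (fun x => x < n) ('I_n) i with
  | Some a, Some b => if 0 < i then tperm a b else 1%g
  | _, _ => 1%g
  end.

Definition prodw (n : nat) (w : seq nat) : 'S_n := (\prod_(i <- w) adj n i)%g.

Fixpoint allwords (n m : nat) : seq (seq nat) :=
  match m with
  | 0 => [:: [::]]
  | m'.+1 => [seq i :: w | i <- iota 1 n.-1, w <- allwords n m']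
  end.

Definition has_word_of_len (n m : nat) (pi : 'S_n) : bool :=
  has (fun w => prodw n w == pi) (allwords n m).

Definition len (n : nat) (pi : 'S_n) : nat :=
  match excluded_middle_informative (exists m, @has_word_of_len n m pi) with
  | left H => ex_minn H
  | right _ => 0
  end.

Definition reduced_words (n : nat) (pi : 'S_n) : seq (seq nat) :=
  [seq w <- allwords n (len pi) | prodw n w == pi].

(* An element of the span of the [w,n] is represented by a finite formal
   sum, i.e. a list of (coefficient, basis element); basis element (w,n)
   stands for [w,n].  Two formal sums are equal iff all coefficients agree.
   Tensor products of spans of bases are spans of pairs of basis elements. *)
Definition lc (K : Type) (B : Type) := seq (K * B).

Definition coef (K : fieldType) (B : eqType) (s : lc K B) (b : B) : K :=
  (\sum_(p <- s | p.2 == b) p.1)%R.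

Definition symb (K : fieldType) (w : seq nat) (n : nat) : lc K (seq nat * nat) :=
  [:: (1%R, (w, n))].

Definition Delta (K : fieldType) (s : lc K (seq nat * nat))
  : lc K ((seq nat * nat) * (seq nat * nat)) :=
  flatten [seq [seq (p.1, ((take i p.2.1, p.2.2), (drop i p.2.1, p.2.2)))
               | i <- iota 0 (size p.2.1).+1] | p <- s].

Definition eps (K : fieldType) (s : lc K (seq nat * nat)) : K :=
  (\sum_(p <- s | p.2.1 == [::]) p.1)%R.

Definition tens (K : fieldType) (B : Type) (x y : lc K B) : lc K (B * B) :=
  [seq (p.1 * q.1, (p.2, q.2))%R | p <- x, q <- y].

Definition bracket (K : fieldType) (n : nat) (pi : 'S_n) : lc K (seq nat * nat) :=
  flatten [seq symb K w n.-1 | w <- reduced_words pi].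

From Stdlib Require Import ClassicalEpsilon.
From mathcomp Require Import all_boot all_fingroup all_algebra.
From mathcomp Require Import zify.
Set Implicit Arguments. Unset Strict Implicit. Unset Printing Implicit Defensive.
Import GRing.Theory.

(** Every coefficient occurring in [pi], in its coproduct and in the
  right-hand side is 1, and no basis tensor occurs twice, so both sides are
  determined by their supports.  A deconcatenation u|v of a reduced word of
  pi is the same thing as a pair of reduced words of pi' = s_u and
  pi'' = s_v with pi = pi' pi'' and l(pi) = l(pi') + l(pi''): since l is
  subadditive and l(s_u) <= |u|, the equality |u| + |v| = l(pi) forces
  |u| = l(pi') and |v| = l(pi'').  For the counit, the empty word is reduced
  for pi iff l(pi) = 0; this uses that the adjacent transpositions generate
  S_n, without which [len] could be its junk value 0. *)

Lemma flatten_map_uniq (S T : eqType) (g : S -> T) (F : T -> seq S) (ts : seq T) :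
  uniq ts -> (forall t, uniq (F t)) -> (forall t, {in F t, forall s, g s = t}) ->
  uniq (flatten (map F ts)).
Proof.
move=> + F_uniq gF; elim: ts => //= t ts IH /andP[t_notin /IH ts_uniq].
rewrite cat_uniq F_uniq ts_uniq andbT; apply/hasPn => s /flatten_mapP[t' t'_in s_in].
by apply/negP => /gF gst; move: t_notin; rewrite -gst (gF t' s s_in) t'_in.
Qed.

Section Words.
Variable n : nat.
Implicit Types (p q : 'S_n) (u v w : seq nat).

Lemma mem_allwords m w :
  (w \in allwords n m) = (size w == m) && all (mem (iota 1 n.-1)) w.
Proof.
elim: m w => [|m IH] [|i w] //=; first by apply/allpairsPdep => -[? [? []]].
rewrite eqSS; apply/allpairsPdep/idP => [[j [x [Hj Hx [-> ->]]]]|].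
  by rewrite Hj -IH.
by move=> /and3P[Hs Hi Hw]; exists i, w; rewrite IH Hs Hw.
Qed.

Lemma allwords_uniq m : uniq (allwords n m).
Proof.
elim: m => //= m IH; apply: allpairs_uniq => //; first exact: iota_uniq.
by move=> [a b] [c d] _ _ [-> ->].
Qed.

Lemma prodw_cat u v : prodw n (u ++ v) = (prodw n u * prodw n v)%g.
Proof. exact: big_cat. Qed.

Lemma adjE (a b : 'I_n) : b = a.+1 :> nat -> adj n b = tperm a b.
Proof.
move=> Eb; rewrite /adj Eb /= !insubT ?(ltn_ord a) -?Eb ?(ltn_ord b) //= => ? ?.
by congr tperm; apply: val_inj.
Qed.

Definition adj_tperms : {set 'S_n} :=
  [set tperm a b | a : 'I_n, b : 'I_n in [set b : 'I_n | b == a.+1 :> nat]].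

Lemma tperm_in_adj_tperms (a b : 'I_n) : tperm a b \in <<adj_tperms>>%g.
Proof.
wlog lt_ab : a b / a < b.
  move=> W; case: (ltngtP a b) => [/W //|/W|/val_inj ->]; first by rewrite tpermC.
  by rewrite tperm1 group1.
have [d Ed] : exists d, b = a + d.+1 :> nat.
  by exists (b - a).-1; rewrite prednK ?subnKC ?subn_gt0 // ltnW.
elim: d b Ed {lt_ab} => [|d IH] b Eb.
  by apply/mem_gen/imset2P; exists a b; rewrite // inE Eb addn1.
have lt_c : a + d.+1 < n by have := ltn_ord b; lia.
pose c := Ordinal lt_c.
have ->: tperm a b = (tperm a c ^ tperm c b)%g.
  by rewrite tpermJ tpermL tpermD //; apply/negP => /eqP/(congr1 val) /=; lia.
rewrite groupJ ?IH //; apply/mem_gen/imset2P; exists c b => //.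
by rewrite inE Eb addnS.
Qed.

Lemma adj_tperms_gen : <<adj_tperms>>%g = [set: 'S_n].
Proof.
apply/setP => p; rewrite inE; have [ts -> _] := prod_tpermP p.
by apply: group_prod => t _; apply: tperm_in_adj_tperms.
Qed.

Lemma prodw_onto p : exists2 w, all (mem (iota 1 n.-1)) w & prodw n w = p.
Proof.
have /gen_prodgP[m [c Hc ->]] : p \in <<adj_tperms>>%g by rewrite adj_tperms_gen inE.
elim: m c Hc => [|m IH] c Hc; first by exists [::]; rewrite // big_ord0 /prodw big_nil.
have [w Hw Ew] := IH (fun i => c (widen_ord (leqnSn m) i)) (fun i => Hc _).
have /imset2P[a b _ /[!inE] /eqP Eb Ec] := Hc ord_max.
exists (rcons w b).
  by rewrite -cats1 all_cat Hw /= mem_iota Eb; have := ltn_ord b; lia.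
by rewrite -cats1 prodw_cat Ew big_ord_recr /prodw big_seq1 Ec (adjE Eb).
Qed.

Lemma has_word_of_lenP m p :
  reflect (exists2 w, w \in allwords n m & prodw n w = p) (has_word_of_len m p).
Proof. by apply: (iffP hasP) => -[w Hw /eqP]; exists w. Qed.

Lemma len_leq m p : has_word_of_len m p -> len p <= m.
Proof.
move=> H; rewrite /len; case: excluded_middle_informative => [E|[]]; last by exists m.
by case: ex_minnP => k _; apply.
Qed.

Lemma has_word_of_len_len p : has_word_of_len (len p) p.
Proof.
rewrite /len; case: excluded_middle_informative => [E|[]]; first by case: ex_minnP.
have [w Hw Ew] := prodw_onto p.
by exists (size w); apply/has_word_of_lenP; exists w; rewrite ?mem_allwords ?eqxx.
Qed.

Lemma mem_reduced_words w p : (w \in reduced_words p) =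
  [&& size w == len p, all (mem (iota 1 n.-1)) w & prodw n w == p].
Proof. by rewrite mem_filter mem_allwords andbC -andbA. Qed.

Lemma reduced_words_uniq p : uniq (reduced_words p).
Proof. exact/filter_uniq/allwords_uniq. Qed.

Lemma reduced_word_exists p : exists w, w \in reduced_words p.
Proof.
have /has_word_of_lenP[w Hw Ew] := has_word_of_len_len p.
by exists w; rewrite mem_filter Ew eqxx.
Qed.

Lemma len_leq_size w : all (mem (iota 1 n.-1)) w -> len (prodw n w) <= size w.
Proof.
by move=> Hw; apply/len_leq/has_word_of_lenP; exists w; rewrite ?mem_allwords ?eqxx.
Qed.

Lemma len_mul p q : len (p * q)%g <= len p + len q.
Proof.
have [u] := reduced_word_exists p; have [v] := reduced_word_exists q.
rewrite !mem_reduced_words => /and3P[/eqP <- Hv /eqP <-] /and3P[/eqP <- Hu /eqP <-].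
by rewrite -prodw_cat -size_cat len_leq_size // all_cat Hu.
Qed.

Lemma reduced_words_prodw w p : w \in reduced_words p -> prodw n w = p.
Proof. by rewrite mem_reduced_words => /and3P[_ _ /eqP]. Qed.

Lemma len_eq0 p : len p = 0 -> p = 1%g.
Proof.
have [w] := reduced_word_exists p; rewrite mem_reduced_words => /and3P[/eqP <- _ /eqP <-].
by move/size0nil ->; rewrite /prodw big_nil.
Qed.

Lemma cat_reduced_words u v p : (u ++ v \in reduced_words p) =
  [&& u \in reduced_words (prodw n u), v \in reduced_words (prodw n v),
      (prodw n u * prodw n v == p)%g & len p == len (prodw n u) + len (prodw n v)].
Proof.
rewrite !mem_reduced_words prodw_cat size_cat all_cat !eqxx !andbT.
apply/and3P/and4P => [[/eqP Es /andP[Hu Hv] /eqP Ep]|].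
  have := len_mul (prodw n u) (prodw n v); rewrite Ep.
  have := len_leq_size Hu; have := len_leq_size Hv.
  by rewrite Hu Hv !andbT eqxx => *; split=> //; apply/eqP; lia.
by move=> [/andP[/eqP -> ->] /andP[/eqP -> ->] -> /eqP ->].
Qed.

Lemma nil_reduced_word p : ([::] \in reduced_words p) = (len p == 0).
Proof.
rewrite mem_reduced_words /= eq_sym; case: eqP => // /len_eq0 ->.
by rewrite /prodw big_nil eqxx.
Qed.

End Words.

Definition reduced_basis n (p : 'S_n) : seq (seq nat * nat) :=
  [seq (w, n.-1) | w <- reduced_words p].

Definition reduced_factorizations n (pi : 'S_n) : seq ('S_n * 'S_n) :=
  [seq p <- enum {: 'S_n * 'S_n} | ((p.1 * p.2)%g == pi) && (len pi == len p.1 + len p.2)].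

Definition deconcat (b : seq nat * nat) : seq ((seq nat * nat) * (seq nat * nat)) :=
  [seq ((take i b.1, b.2), (drop i b.1, b.2)) | i <- iota 0 (size b.1).+1].

Lemma mem_deconcat x y b :
  ((x, y) \in deconcat b) = [&& x.1 ++ y.1 == b.1, x.2 == b.2 & y.2 == b.2].
Proof.
case: x y b => [u a] [v c] [w m] /=.
apply/mapP/and3P => [[i _ [-> -> -> ->]]|[/eqP <- /eqP -> /eqP ->]].
  by rewrite cat_take_drop.
exists (size u); first by rewrite mem_iota size_cat leq0n add0n ltnS leq_addr.
by rewrite take_size_cat ?drop_size_cat.
Qed.

Lemma deconcat_uniq b : uniq (deconcat b).
Proof.
rewrite map_inj_in_uniq ?iota_uniq // => i j.
rewrite !mem_iota !leq0n !add0n !ltnS => Hi Hj [Ei _].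
by rewrite -(size_takel Hi) Ei size_takel.
Qed.

Lemma mem_reduced_basis n w m (p : 'S_n) :
  ((w, m) \in reduced_basis p) = (w \in reduced_words p) && (m == n.-1).
Proof. by apply/mapP/andP => [[w' ? [-> ->]] | [? /eqP ->]]; last exists w. Qed.

Lemma reduced_basis_uniq n (p : 'S_n) : uniq (reduced_basis p).
Proof. by rewrite map_inj_uniq ?reduced_words_uniq // => w w' []. Qed.

Section Coproduct.
Variables (n : nat) (pi : 'S_n).

Definition reduced_tensors : seq ((seq nat * nat) * (seq nat * nat)) :=
  flatten [seq [seq (x, y) | x <- reduced_basis p.1, y <- reduced_basis p.2]
          | p <- reduced_factorizations pi].

Lemma deconcat_reduced_basis_uniq : uniq (flatten (map deconcat (reduced_basis pi))).
Proof.
apply: (flatten_map_uniq (g := fun xy => (xy.1.1 ++ xy.2.1, xy.1.2))).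
- exact: reduced_basis_uniq.
- exact: deconcat_uniq.
move=> b [x y]; rewrite mem_deconcat => /and3P[/eqP Eb /eqP Ex _].
by rewrite Eb Ex -surjective_pairing.
Qed.

Lemma reduced_tensors_uniq : uniq reduced_tensors.
Proof.
apply: (flatten_map_uniq (g := fun xy => (prodw n xy.1.1, prodw n xy.2.1))).
- exact/filter_uniq/enum_uniq.
- move=> p; apply: allpairs_uniq; rewrite ?reduced_basis_uniq //.
  by move=> [? ?] [? ?] _ _ [-> ->].
move=> [p1 p2] _ /allpairsP[[[u a] [v c]] [/= + + ->]].
rewrite !mem_reduced_basis => /andP[/reduced_words_prodw <- _].
by move=> /andP[/reduced_words_prodw <- _].
Qed.

Lemma deconcat_reduced_basis : flatten (map deconcat (reduced_basis pi)) =i reduced_tensors.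
Proof.
move=> xy; apply/flatten_mapP/flatten_mapP.
  move=> [[w m]]; rewrite mem_reduced_basis => /andP[w_red /eqP ->].
  case: xy => [[u a] [v c]]; rewrite mem_deconcat /= => /and3P[/eqP Ew /eqP -> /eqP ->].
  move: w_red; rewrite -Ew cat_reduced_words => /and4P[u_red v_red Ep El].
  exists (prodw n u, prodw n v); first by rewrite mem_filter mem_enum Ep El.
  apply/allpairsP; exists ((u, n.-1), (v, n.-1)).
  by rewrite !mem_reduced_basis u_red v_red eqxx.
move=> [[p1 p2]]; rewrite mem_filter => /andP[/andP[/eqP Ep /eqP El] _].
move=> /allpairsP[[[u a] [v c]] [/= + + ->]].
rewrite !mem_reduced_basis => /andP[u_red /eqP ->] /andP[v_red /eqP ->].
exists (u ++ v, n.-1); last by rewrite mem_deconcat /= !eqxx.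
rewrite mem_reduced_basis eqxx andbT cat_reduced_words.
by rewrite (reduced_words_prodw u_red) (reduced_words_prodw v_red) u_red v_red Ep El !eqxx.
Qed.

End Coproduct.

Section BasisSums.
Variable K : fieldType.

Definition basis_sum (B : Type) (bs : seq B) : lc K B := [seq (1%R, b) | b <- bs].

Lemma sum_basis_sum (B : Type) (P : pred B) (bs : seq B) :
  (\sum_(x <- basis_sum bs | P x.2) x.1)%R = (count P bs)%:R%R.
Proof. by rewrite big_map big_const_seq iter_addr_0. Qed.

Lemma coef_basis_sum (B : eqType) (bs : seq B) b :
  uniq bs -> coef (basis_sum bs) b = (b \in bs)%:R%R.
Proof. by move=> bs_uniq; rewrite /coef (sum_basis_sum (pred1 b)) count_uniq_mem. Qed.

Lemma flatten_basis_sum (T B : Type) (F : T -> seq B) (s : seq T) :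
  flatten [seq basis_sum (F x) | x <- s] = basis_sum (flatten (map F s)).
Proof. by rewrite /basis_sum map_flatten -map_comp. Qed.

Lemma Delta_basis_sum bs : Delta (basis_sum bs) = basis_sum (flatten (map deconcat bs)).
Proof.
rewrite -flatten_basis_sum /Delta -map_comp; congr flatten; apply: eq_map => b.
by rewrite /basis_sum -map_comp.
Qed.

Lemma tens_basis_sum (B : Type) (xs ys : seq B) :
  tens (basis_sum xs) (basis_sum ys) = basis_sum [seq (x, y) | x <- xs, y <- ys].
Proof.
rewrite /tens allpairs_mapl allpairs_mapr /basis_sum map_allpairs.
by apply: eq_allpairs => x y /=; rewrite mul1r.
Qed.

Lemma bracketE n (p : 'S_n) : bracket K p = basis_sum (reduced_basis p).
Proof. by rewrite /bracket flatten_map1 /basis_sum -map_comp. Qed.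

End BasisSums.

Theorem corollary4p2 (K : fieldType) (n : nat) (pi : 'S_n) :
  (forall b : (seq nat * nat) * (seq nat * nat),
     coef (Delta (bracket K pi)) b =
     coef (flatten [seq tens (bracket K p.1) (bracket K p.2)
                   | p <- enum {: 'S_n * 'S_n}
                   & ((p.1 * p.2)%g == pi) && (len pi == len p.1 + len p.2)]) b)
  /\ eps (bracket K pi) = (if len pi == 0 then 1%R else 0%R).
Proof.
split=> [b|].
  under eq_map => p do rewrite !bracketE tens_basis_sum.
  rewrite -/(reduced_factorizations pi) flatten_basis_sum -/(reduced_tensors pi).
  rewrite bracketE Delta_basis_sum !coef_basis_sum ?reduced_tensors_uniq //.
    by rewrite deconcat_reduced_basis.
  exact: deconcat_reduced_basis_uniq.
rewrite bracketE /eps (sum_basis_sum _ (fun b : seq nat * nat => b.1 == [::])) count_map.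
rewrite (eq_count (a2 := pred1 [::])) // count_uniq_mem ?reduced_words_uniq //.
by rewrite nil_reduced_word; case: eqP.
Qed.
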